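(* Let $M=p_1^{n_1}\cdots p_K^{n_K}$ with distinct primes $p_\nu$ and $n_\nu\in\mathbb{N}$, and $R=\{r\in\mathbb{Z}_M:(r,M)=1\}$. For $\nu=1,\dots,K$, let $x_\nu,x'_\nu\in\mathbb{Z}_M$ with $(x_\nu,M)=(x'_\nu,M)=M/p_\nu^{\alpha_\nu}$, where $\alpha_1,\dots,\alpha_K\ge1$. Then there exists $r\in R$ such that $rx_\nu=x'_\nu$ for all $\nu=1,\dots,K$.
   Context: $(x,M)$ denotes $\gcd(x,M)$ for $x\in\mathbb{Z}_M$. *)

From mathcomp Require Import all_boot.
(* Z_M is modelled as 'I_M (residues 0..M-1) with multiplication mod M;
   (x,M) is gcdn x M (so (0,M) = M, as in Z_M). *)

(* Write x = u g and x' = u' g with g = M / p^alpha the common gcd with M, so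
   that u and u' are units modulo p^alpha.  Since M = g p^alpha, the equation
   r x = x' in Z_M is equivalent to r u = u' modulo p^alpha.  These congruences
   for the distinct prime powers p_nu^alpha_nu are solved simultaneously by the
   Chinese remainder theorem, and every solution is prime to each p_nu, hence
   to M. *)
From mathcomp Require Import all_boot cyclic.

Lemma coprime_prodr (I : Type) (s : seq I) (P : pred I) (F : I -> nat) m :
  (forall i, P i -> coprime m (F i)) -> coprime m (\prod_(i <- s | P i) F i).
Proof.
move=> coF; apply: (big_ind (coprime m)) => //; first exact: coprimen1.
by move=> a b coa cob; rewrite coprimeMr coa cob.
Qed.

Lemma chinese_seq (I : eqType) (s : seq I) (m t : I -> nat) :
    uniq s -> {in s &, forall i j, i != j -> coprime (m i) (m j)} ->
  exists r, forall i, i \in s -> r = t i %[mod m i].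
Proof.
elim: s => [|a s IHs] /=; first by exists 0.
move=> /andP[a_notin_s uniq_s] co_m.
have [r r_mod] : exists r, forall i, i \in s -> r = t i %[mod m i].
  by apply: IHs => // i j si sj; apply: co_m; rewrite inE ?si ?sj orbT.
have co_a_s : coprime (m a) (\prod_(j <- s) m j).
  rewrite big_seq; apply: coprime_prodr => j sj; apply: co_m.
  - exact: mem_head.
  - by rewrite inE sj orbT.
  - by apply: contraNneq a_notin_s => ->.
exists (chinese (m a) (\prod_(j <- s) m j) (t a) r) => i.
rewrite inE => /predU1P[-> | si]; first exact: chinese_modl.
have mi_dvd : m i %| \prod_(j <- s) m j by rewrite (bigD1_seq i) ?dvdn_mulr.
by rewrite -r_mod // -(modn_dvdm _ mi_dvd) chinese_modr // modn_dvdm.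
Qed.

Lemma Euler_inverse u q : coprime u q -> u ^ (totient q).-1 * u = 1 %[mod q].
Proof.
case: q => [|q] co_uq; first by move: co_uq; rewrite /coprime gcdn0 => /eqP ->.
by rewrite -expnSr prednK ?totient_gt0 // Euler_exp_totient.
Qed.

Lemma coprime_divn_gcdn x M q :
  0 < M -> gcdn x M * q = M -> coprime (x %/ gcdn x M) q.
Proof.
move=> M_gt0 gq_eq; set g := gcdn x M.
have g_gt0 : 0 < g by rewrite gcdn_gt0 M_gt0 orbT.
rewrite /coprime -(eqn_pmul2r g_gt0) mul1n muln_gcdl divnK ?dvdn_gcdl //.
by rewrite mulnC gq_eq.
Qed.

Lemma modn_mul_scaled r u u' q g :
  u' * g < q * g -> r * u = u' %[mod q] -> (r * (u * g)) %% (q * g) = u' * g.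
Proof.
rewrite ltn_mul2r => /andP[_ lt_u'q] ru_eq.
by rewrite mulnA -muln_modl ru_eq modn_small.
Qed.

Theorem lemma3p6 (K : nat) (p n : 'I_K -> nat)
  (p_prime : forall nu, prime (p nu))
  (p_inj : injective p)
  (alpha : 'I_K -> nat) (alpha_pos : forall nu, 0 < alpha nu)
  (x x' : 'I_K -> 'I_(\prod_(i < K) p i ^ n i))
  (hx : forall nu, gcdn (x nu) (\prod_(i < K) p i ^ n i) * p nu ^ alpha nu
                   = \prod_(i < K) p i ^ n i)
  (hx' : forall nu, gcdn (x' nu) (\prod_(i < K) p i ^ n i) * p nu ^ alpha nu
                   = \prod_(i < K) p i ^ n i) :
  exists r : 'I_(\prod_(i < K) p i ^ n i),
    coprime r (\prod_(i < K) p i ^ n i) /\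
    forall nu, (r * x nu) %% (\prod_(i < K) p i ^ n i) = x' nu.
Proof.
set M := \prod_(i < K) p i ^ n i in x x' hx hx' *.
have M_gt0 : 0 < M by apply: prodn_gt0 => i; rewrite expn_gt0 prime_gt0.
pose q nu := p nu ^ alpha nu.
have q_gt0 nu : 0 < q nu by rewrite expn_gt0 prime_gt0.
pose g nu := gcdn (x nu) M.
have g'_eq nu : gcdn (x' nu) M = g nu.
  by apply/eqP; rewrite -(eqn_pmul2r (q_gt0 nu)) hx hx'.
pose u nu := x nu %/ g nu.
pose u' nu := x' nu %/ g nu.
have co_u nu : coprime (u nu) (q nu) by apply: coprime_divn_gcdn.
have co_u' nu : coprime (u' nu) (q nu) by rewrite /u' -g'_eq; apply: coprime_divn_gcdn.
have xE nu : x nu = u nu * g nu :> nat by rewrite divnK ?dvdn_gcdl.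
have x'E nu : x' nu = u' nu * g nu :> nat by rewrite divnK // -g'_eq dvdn_gcdl.
pose t nu := u' nu * u nu ^ (totient (q nu)).-1.
have [r r_mod] : exists r, forall nu, nu \in enum 'I_K -> r = t nu %[mod q nu].
  apply: chinese_seq; first exact: enum_uniq.
  move=> i j _ _ ij; apply/coprimeXl/coprimeXr.
  by rewrite prime_coprime // dvdn_prime2 //; apply: contra ij => /eqP/p_inj->.
have {}r_mod nu : r = t nu %[mod q nu] by apply: r_mod; rewrite mem_enum.
exists (Ordinal (ltn_pmod r M_gt0)); split=> [|nu] /=.
  rewrite coprime_modl coprime_prodr // => i _; apply: coprimeXr.
  rewrite -(coprime_pexpr _ _ (alpha_pos i)) -coprime_modl r_mod coprime_modl.
  by rewrite coprimeMl co_u' coprimeXl.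
rewrite modnMml xE x'E -(hx nu) -/(g nu) [g nu * _]mulnC; apply: modn_mul_scaled.
  by rewrite -[u' nu * g nu]x'E mulnC hx.
by rewrite -modnMml r_mod modnMml /t -mulnA -modnMmr Euler_inverse // modnMmr muln1.
Qed.
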